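(* In the multiple-choice secretary problem with predictions with capacity $k$, run the Learned Kleinberg algorithm with any threshold $\theta\ge 0$. For every instance with $M=\emptyset$, the algorithm's output $S$ satisfies $v(S)\ge (1-2\epsilon)\,v(S^* )$; in particular the algorithm is $(1-2\epsilon)$-competitive on such instances.
   Context: Multiple-choice secretary problem with predictions (continuous-time model): there are $n$ candidates $N=\{1,\dots,n\}$, each with actual value $v(i)>0$ (unknown in advance) and predicted value $\hat v(i)\ge 0$ (known in advance), and a capacity $k$. Each candidate independently receives an arrival time uniform on $[0,1]$; candidates are revealed in increasing order of arrival time, revealing index and actual value, and the algorithm irrevocably decides upon arrival whether to hire; at most $k$ candidates may be hired. For $S\subseteq N$, $v(S)=\sum_{i\in S}v(i)$, $\hat v(S)=\sum_{i\in S}\hat v(i)$. $S^*$ is a set of at most $k$ candidates maximizing $v$, $\epsilon=\max_{i\in N}|1-\hat v(i)/v(i)|$, and $M=\{i\in N : |1-\hat v(i)/v(i)|>\theta\}$. Learned Kleinberg algorithm with capacity $k$ and threshold $\theta$: fix $\hat S\in\arg\max_{S\subseteq N,|S|\le k}\hat v(S)$ and set $S=\emptyset$. Process candidates in arrival order; upon arrival of $i$: if $|1-\hat v(i)/v(i)|>\theta$, hire $i$, let $k'=k-|S|-1$, apply Kleinberg's (2005) multiple-choice secretary algorithm with capacity $k'$ to the remaining candidates obtaining $T$, and output $S\cup\{i\}\cup T$; otherwise, if $i\in\hat S$, hire $i$ (add it to $S$) and output $S$ if $|S|=k$. If all candidates are processed, output $S$. *)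

From mathcomp Require Import all_boot all_order all_algebra.
Set Implicit Arguments. Unset Strict Implicit. Unset Printing Implicit Defensive.
Import Order.TTheory GRing.Theory Num.Theory.
Local Open Scope ring_scope.

Section LK.
Variables (R : realFieldType) (n : nat).
Variables (v vh : 'I_n -> R).

Definition err (i : 'I_n) : R := `|1 - vh i / v i|.

(* epsilon = max_i err i  (errors are >= 0, so 0 is a neutral bottom) *)
Definition eps : R := \big[Num.max/0]_(i < n) err i.

Definition Mset (theta : R) : {set 'I_n} := [set i | theta < err i].

Definition val_of (f : 'I_n -> R) (S : {set 'I_n}) : R := \sum_(i in S) f i.

(* Learned Kleinberg with capacity k and threshold theta.
   [kleinberg k' s] is the set returned by Kleinberg's (2005) multiple-choice
   secretary algorithm with capacity k' run on the remaining arrival sequence s.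
   [Shat] is the fixed predicted-optimal set; [S] the current hired set;
   [s] the remaining candidates in arrival order. *)
Fixpoint learned_kleinberg (kleinberg : nat -> seq 'I_n -> {set 'I_n})
    (k : nat) (theta : R) (Shat S : {set 'I_n}) (s : seq 'I_n) : {set 'I_n} :=
  match s with
  | [::] => S
  | i :: s' =>
      if theta < err i then
        (S :|: [set i]) :|: kleinberg (k - #|S| - 1)%N s'
      else if i \in Shat then
        let S' := i |: S in
        if #|S'| == k then S'
        else learned_kleinberg kleinberg k theta Shat S' s'
      else learned_kleinberg kleinberg k theta Shat S s'
  end.

End LK.

(* When no candidate is badly predicted, the fallback to Kleinberg's algorithm
   never fires, every member of the predicted-optimal set Shat arrives and is
   hired, and the algorithm returns exactly Shat.  Every prediction vh i lies
   between (1 - eps) v i and (1 + eps) v i, so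
   (1 - eps) v(Sstar) <= vh(Sstar) <= vh(Shat) <= (1 + eps) v(Shat),
   and (1 - 2 eps)(1 + eps) <= 1 - eps turns this into v(Shat) >= (1 - 2 eps) v(Sstar). *)
From mathcomp Require Import all_boot all_order all_algebra.
From mathcomp Require Import lra.
Set Implicit Arguments. Unset Strict Implicit. Unset Printing Implicit Defensive.
Import Order.TTheory GRing.Theory Num.Theory.
Local Open Scope ring_scope.

Lemma rel_err_bounds (R : realFieldType) (a b e : R) :
  0 < a -> `|1 - b / a| <= e -> (1 - e) * a <= b <= (1 + e) * a.
Proof.
move=> a_gt0; have -> : 1 - b / a = (a - b) / a by rewrite mulrBl divff ?gt_eqF.
rewrite normf_div (gtr0_norm a_gt0) ler_pdivrMr // ler_norml => /andP[lo up].
by apply/andP; split; lra.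
Qed.

Lemma competitive_of_scaled_bound (R : realFieldType) (e x y : R) :
  0 <= e -> 0 <= x -> (1 - e) * x <= (1 + e) * y -> (1 - 2 * e) * x <= y.
Proof. by move=> e_ge0 x_ge0 h; nra. Qed.

Section LearnedKleinberg.
Variables (R : realFieldType) (n : nat) (v vh : 'I_n -> R).

Lemma err_le_eps i : err v vh i <= eps v vh.
Proof. by rewrite /eps (bigD1 i) //= le_max lexx. Qed.

Lemma eps_ge0 : 0 <= eps v vh.
Proof. by rewrite /eps; elim/big_rec: _ => // i x _ x_ge0; rewrite le_max x_ge0 orbT. Qed.

Lemma val_ofZ (c : R) (f : 'I_n -> R) (S : {set 'I_n}) :
  val_of (fun i => c * f i) S = c * val_of f S.
Proof. by rewrite /val_of mulr_sumr. Qed.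

Lemma ler_val_of (f g : 'I_n -> R) (S : {set 'I_n}) :
  (forall i, f i <= g i) -> val_of f S <= val_of g S.
Proof. by move=> fg; apply: ler_sum => i _. Qed.

Hypothesis v_gt0 : forall i, 0 < v i.

Lemma pred_bounds i :
  (1 - eps v vh) * v i <= vh i <= (1 + eps v vh) * v i.
Proof. exact: rel_err_bounds (v_gt0 i) (err_le_eps i). Qed.

Lemma val_of_ge0 (S : {set 'I_n}) : 0 <= val_of v S.
Proof. by apply: sumr_ge0 => i _; apply: ltW. Qed.

Variables (k : nat) (Shat : {set 'I_n}).
Hypotheses (Shat_card : (#|Shat| <= k)%N)
  (Shat_max : forall T : {set 'I_n}, (#|T| <= k)%N -> val_of vh T <= val_of vh Shat).

Lemma val_of_pred_opt (T : {set 'I_n}) :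
  (#|T| <= k)%N -> (1 - 2 * eps v vh) * val_of v T <= val_of v Shat.
Proof.
move=> T_card; apply: competitive_of_scaled_bound; rewrite ?eps_ge0 ?val_of_ge0 //.
have lo : (1 - eps v vh) * val_of v T <= val_of vh T.
  by rewrite -val_ofZ; apply: ler_val_of => i; case/andP: (pred_bounds i).
have up : val_of vh Shat <= (1 + eps v vh) * val_of v Shat.
  by rewrite -val_ofZ; apply: ler_val_of => i; case/andP: (pred_bounds i).
by apply: le_trans lo (le_trans (Shat_max T_card) up).
Qed.

Lemma learned_kleinberg_eq_pred_opt kleinberg theta (s : seq 'I_n) (S : {set 'I_n}) :
  {in s, forall i, ~~ (theta < err v vh i)} ->
  S \subset Shat -> {subset Shat <= [predU S & s]} ->
  learned_kleinberg v vh kleinberg k theta Shat S s = Shat.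
Proof.
elim: s S => [|i s IH] S good_s S_sub cover /=.
  apply/eqP; rewrite eqEsubset S_sub; apply/subsetP => x /cover.
  by rewrite inE in_nil orbF.
rewrite (negbTE (good_s i (mem_head _ _))).
have good_s' : {in s, forall j, ~~ (theta < err v vh j)}.
  by move=> j j_s; apply: good_s; rewrite in_cons j_s orbT.
case: ifP => i_Shat; last first.
  apply: IH => // x x_Shat; move: (cover x x_Shat); rewrite !inE.
  by case: eqP x_Shat => [-> | _ _]; rewrite ?i_Shat.
have iS_sub : i |: S \subset Shat by rewrite subUset sub1set i_Shat S_sub.
case: ifP => [/eqP iS_card | _].
  by apply/eqP; rewrite eqEcard iS_sub iS_card Shat_card.
apply: IH => // x /cover; rewrite !inE.
by case: (x == i); rewrite ?orbT //= => ->.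
Qed.

End LearnedKleinberg.

Theorem lemma1 (R : realFieldType) (n k : nat) (v vh : 'I_n -> R)
    (theta : R)
    (kleinberg : nat -> seq 'I_n -> {set 'I_n})
    (Shat Sstar : {set 'I_n}) (arrival : seq 'I_n) :
  (forall i, 0 < v i) ->
  (forall i, 0 <= vh i) ->
  0 <= theta ->
  (* Kleinberg's subroutine selects at most k' of the remaining candidates *)
  (forall k' s, kleinberg k' s \subset [set x in s] /\ (#|kleinberg k' s| <= k')%N) ->
  (* Shat is a maximizer of the predicted value among sets of size <= k *)
  (#|Shat| <= k)%N ->
  (forall T : {set 'I_n}, (#|T| <= k)%N -> val_of vh T <= val_of vh Shat) ->
  (* Sstar is a maximizer of the actual value among sets of size <= k *)
  (#|Sstar| <= k)%N ->
  (forall T : {set 'I_n}, (#|T| <= k)%N -> val_of v T <= val_of v Sstar) ->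
  (* arrival order: every candidate arrives exactly once *)
  perm_eq arrival (enum 'I_n) ->
  (* M is empty *)
  Mset v vh theta = set0 ->
  (1 - 2 * eps v vh) * val_of v Sstar
    <= val_of v (learned_kleinberg v vh kleinberg k theta Shat set0 arrival).
Proof.
move=> v_gt0 _ _ _ Shat_card Shat_max Sstar_card _ arrival_perm M_empty.
have no_bad i : ~~ (theta < err v vh i).
  by apply/negP => bad; have := in_set0 i; rewrite -M_empty inE bad.
rewrite learned_kleinberg_eq_pred_opt //.
- exact: (val_of_pred_opt v_gt0 Shat_max Sstar_card).
- exact: sub0set.
- by move=> x _; rewrite inE (perm_mem arrival_perm) mem_enum orbT.
Qed.
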